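(* Consider the DSA algorithm described in the context, under conditions (a)–(c) on the weights and assuming every $f_{n,i}$ is differentiable and $\mu$-strongly convex with $L$-Lipschitz gradient. Let $q_{\min}:=\min_n q_n$ and $q_{\max}:=\max_n q_n$. Then for all $t>0$, $$\mathbb{E}\left[p^{t+1}\mid\mathcal{F}^t\right]\le\left[1-\frac1{q_{\max}}\right]p^t+\frac1{q_{\min}}\left[f(\mathbf{x}^t)-f(\mathbf{x}^* )-\nabla f(\mathbf{x}^* )^T(\mathbf{x}^t-\mathbf{x}^* )\right].$$
   Context: Problem: a connected network of $N$ nodes; node $n$ holds $q_n$ functions $f_{n,i}:\mathbb{R}^p\to\mathbb{R}$, each differentiable, $\mu$-strongly convex, with $L$-Lipschitz gradient; $f_n:=\frac1{q_n}\sum_i f_{n,i}$, $\tilde{\mathbf{x}}^*:=\arg\min_{\mathbf{x}}\sum_n f_n(\mathbf{x})$. For $\mathbf{x}=[\mathbf{x}_1;\dots;\mathbf{x}_N]\in\mathbb{R}^{Np}$, $f(\mathbf{x}):=\sum_n f_n(\mathbf{x}_n)$, $\mathbf{x}^*:=[\tilde{\mathbf{x}}^*;\dots;\tilde{\mathbf{x}}^*]$. Weights: $\mathbf{W},\tilde{\mathbf{W}}\in\mathbb{R}^{N\times N}$ with entries nonzero only for $m=n$ or $m$ a neighbor of $n$, satisfying (a) symmetry; (b) $\mathrm{null}(\mathbf{I}-\tilde{\mathbf{W}})\supseteq\mathrm{span}(\mathbf{1})$, $\mathrm{null}(\mathbf{I}-\mathbf{W})=\mathrm{span}(\mathbf{1})$,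 $\mathrm{null}(\tilde{\mathbf{W}}-\mathbf{W})=\mathrm{span}(\mathbf{1})$; (c) $\mathbf{W}\preceq\tilde{\mathbf{W}}\preceq(\mathbf{I}+\mathbf{W})/2$, $\tilde{\mathbf{W}}\succ0$. $\mathbf{Z}:=\mathbf{W}\otimes\mathbf{I}_p$, $\tilde{\mathbf{Z}}:=\tilde{\mathbf{W}}\otimes\mathbf{I}_p$. DSA: stepsize $\alpha>0$, initial $\mathbf{x}_n^0$, $\mathbf{y}_{n,i}^0=\mathbf{x}_n^0$. At each $t\ge0$ node $n$ draws $i_n^t$ uniformly from $\{1,\dots,q_n\}$ independently of the past, sets $\hat{\mathbf{g}}_n^t:=\nabla f_{n,i_n^t}(\mathbf{x}_n^t)-\nabla f_{n,i_n^t}(\mathbf{y}_{n,i_n^t}^t)+\frac1{q_n}\sum_{i}\nabla f_{n,i}(\mathbf{y}_{n,i}^t)$, and $\mathbf{y}_{n,i}^{t+1}=\mathbf{x}_n^t$ if $i=i_n^t$, else $\mathbf{y}_{n,i}^{t+1}=\mathbf{y}_{n,i}^t$. With $\hat{\mathbf{g}}^t:=[\hat{\mathbf{g}}_1^t;\dots;\hat{\mathbf{g}}_N^t]$: $\mathbf{x}^1=\mathbf{Z}\mathbf{x}^0-\alpha\hat{\mathbf{g}}^0$, $\mathbf{x}^{t+1}=(\mathbf{I}+\mathbf{Z})\mathbf{x}^t-\tilde{\mathbf{Z}}\mathbf{x}^{t-1}-\alpha[\hat{\mathbf{g}}^t-\hat{\mathbf{g}}^{t-1}]$ for $t\ge1$.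 $\mathcal{F}^t$ is the sigma-algebra of the history up to time $t$. Define $$p^t:=\sum_{n=1}^N\frac1{q_n}\sum_{i=1}^{q_n}\left(f_{n,i}(\mathbf{y}_{n,i}^t)-f_{n,i}(\tilde{\mathbf{x}}^* )-\nabla f_{n,i}(\tilde{\mathbf{x}}^* )^T(\mathbf{y}_{n,i}^t-\tilde{\mathbf{x}}^* )\right).$$ *)

From HB Require Import structures.
From mathcomp Require Import all_boot all_order all_algebra.
From mathcomp Require Import all_classical all_reals all_analysis.
Set Implicit Arguments. Unset Strict Implicit. Unset Printing Implicit Defensive.
Import Order.TTheory GRing.Theory Num.Theory.
Local Open Scope ring_scope.

Definition dotp (R : realType) (p : nat) (u v : 'rV[R]_p) : R :=
  \sum_(j < p) u 0 j * v 0 j.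
Definition norm2 (R : realType) (p : nat) (v : 'rV[R]_p) : R :=
  Num.sqrt (dotp v v).

Definition qform (R : realType) (N : nat) (A : 'M[R]_N) (v : 'cV[R]_N) : R :=
  (v^T *m A *m v) 0 0.

(* Conditions (a)-(c) on the weights, for a network given by a symmetric
   irreflexive connected adjacency relation [adj] on the N nodes. *)
Definition weights_ok (R : realType) (N : nat) (adj : rel 'I_N)
    (W Wt : 'M[R]_N) : Prop :=
  (forall n m, W n m != 0 -> m = n \/ adj n m) /\
  (forall n m, Wt n m != 0 -> m = n \/ adj n m) /\
  W^T = W /\ Wt^T = Wt /\
  (forall c : R, (1%:M - Wt) *m (c *: (const_mx 1 : 'cV[R]_N)) = 0) /\
  (forall v : 'cV[R]_N, (1%:M - W) *m v = 0 <-> exists c : R, v = c *: (const_mx 1 : 'cV[R]_N)) /\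
  (forall v : 'cV[R]_N, (Wt - W) *m v = 0 <-> exists c : R, v = c *: (const_mx 1 : 'cV[R]_N)) /\
  (forall v, qform W v <= qform Wt v) /\
  (forall v, qform Wt v <= qform ((2%:R)^-1 *: (1%:M + W)) v) /\
  (forall v : 'cV[R]_N, v != 0 -> 0 < qform Wt v).

(* One realization of the random indices at a given time: node n picks
   an index in {0,..,q n - 1}. *)
Definition sel (N : nat) (q : 'I_N -> nat) := {dffun forall n : 'I_N, 'I_(q n)}.

Section DSA.
Context (R : realType) (p N : nat) (q : 'I_N -> nat)
  (g : forall n : 'I_N, 'I_(q n) -> 'rV[R]_p -> 'rV[R]_p)
  (W Wt : 'M[R]_N) (alpha : R) (x0 : 'I_N -> 'rV[R]_p).

Definition stackV := 'I_N -> 'rV[R]_p.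
Definition tableV := forall n : 'I_N, 'I_(q n) -> 'rV[R]_p.

(* (Z x)_n = sum_m W_{nm} x_m, i.e. (W (x) I_p) x *)
Definition mixW (A : 'M[R]_N) (x : stackV) : stackV :=
  fun n => \sum_(m < N) A n m *: x m.

Definition ghat (y : tableV) (x : stackV) (s : sel q) : stackV :=
  fun n => g (s n) (x n) - g (s n) (y n (s n))
           + (q n)%:R^-1 *: \sum_(i < q n) g i (y n i).

Definition yupd (y : tableV) (x : stackV) (s : sel q) : tableV :=
  fun n i => if i == s n then x n else y n i.

Definition y0 : tableV := fun n _ => x0 n.

(* dsa_state om t = (x^t, x^{t+1}, y^{t+1}, \hat g^t), where om t is the
   realization of the indices i^t_n drawn at time t. *)
Fixpoint dsa_state (om : nat -> sel q) (t : nat)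
    : stackV * stackV * tableV * stackV :=
  match t with
  | 0 => let g0 := ghat y0 x0 (om 0%N) in
         (x0, fun n => mixW W x0 n - alpha *: g0 n, yupd y0 x0 (om 0%N), g0)
  | t'.+1 =>
      let: (xa, xb, yb, ga) := dsa_state om t' in
      let gb := ghat yb xb (om t) in
      (xb, fun n => xb n + mixW W xb n - mixW Wt xa n - alpha *: (gb n - ga n),
       yupd yb xb (om t), gb)
  end.

Definition dsa_x (om : nat -> sel q) (t : nat) : stackV :=
  (dsa_state om t).1.1.1.
Definition dsa_y (om : nat -> sel q) (t : nat) : tableV :=
  match t with 0 => y0 | t'.+1 => (dsa_state om t').1.2 end.

End DSA.

Definition om_set (N : nat) (q : 'I_N -> nat) (om : nat -> sel q) (t : nat)
    (s : sel q) : nat -> sel q :=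
  fun k => if k == t then s else om k.

(* Conditional expectation E[X | F^t] at the realization om, where F^t is
   generated by the draws i^0, ..., i^{t-1}, and the draws i^t_n are uniform
   on {1..q_n}, independent across nodes and of the past. X is any quantity
   determined by the realization; E[X|F^t] averages over the draw at time t
   (for X depending only on draws up to time t, which is the case below). *)
Definition condE_t (R : realType) (N : nat) (q : 'I_N -> nat)
    (X : (nat -> sel q) -> R) (t : nat) (om : nat -> sel q) : R :=
  \sum_(s : sel q) (\prod_(n < N) ((q n)%:R : R)^-1) * X (om_set om t s).

Definition plyap (R : realType) (p N : nat) (q : 'I_N -> nat)
    (f : forall n : 'I_N, 'I_(q n) -> 'rV[R]_p -> R)
    (g : forall n : 'I_N, 'I_(q n) -> 'rV[R]_p -> 'rV[R]_p)
    (xs : 'rV[R]_p) (y : forall n : 'I_N, 'I_(q n) -> 'rV[R]_p) : R :=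
  \sum_(n < N) (q n)%:R^-1 *
    \sum_(i < q n) (f n i (y n i) - f n i xs - dotp (g n i xs) (y n i - xs)).

Definition fbar (R : realType) (p N : nat) (q : 'I_N -> nat)
    (f : forall n : 'I_N, 'I_(q n) -> 'rV[R]_p -> R) (n : 'I_N) (x : 'rV[R]_p) : R :=
  (q n)%:R^-1 * \sum_(i < q n) f n i x.
Definition gbar (R : realType) (p N : nat) (q : 'I_N -> nat)
    (g : forall n : 'I_N, 'I_(q n) -> 'rV[R]_p -> 'rV[R]_p) (n : 'I_N) (x : 'rV[R]_p)
    : 'rV[R]_p :=
  (q n)%:R^-1 *: \sum_(i < q n) g n i x.

Definition bregF (R : realType) (p N : nat) (q : 'I_N -> nat)
    (f : forall n : 'I_N, 'I_(q n) -> 'rV[R]_p -> R)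
    (g : forall n : 'I_N, 'I_(q n) -> 'rV[R]_p -> 'rV[R]_p)
    (xs : 'rV[R]_p) (x : 'I_N -> 'rV[R]_p) : R :=
  \sum_(n < N) (fbar f n (x n) - fbar f n xs - dotp (gbar g n xs) (x n - xs)).

Definition qmax (N : nat) (q : 'I_N -> nat) : nat := \big[maxn/0%N]_(n < N) q n.
Definition qmin (N : nat) (q : 'I_N -> nat) : nat := \big[minn/qmax q]_(n < N) q n.

From HB Require Import structures.
From mathcomp Require Import all_boot all_order all_algebra.
From mathcomp Require Import all_classical all_reals all_analysis.
From mathcomp Require Import lra.
Import Order.TTheory GRing.Theory Num.Theory.
Local Open Scope ring_scope.

(** With [phi_{n,i}] the Bregman divergence of [f_{n,i}] at [x*], we have
    [p^t = sum_n (1/q_n) sum_i phi_{n,i}(y^t_{n,i})].  Given the past, the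
    uniform draw [i^t_n] replaces the single entry [y_{n,i^t_n}] of the table
    of node [n] by [x^t_n], so with [A_n = sum_i phi_{n,i}(y^t_{n,i})] and
    [B_n = sum_i phi_{n,i}(x^t_n)] the expected inner sum becomes
    [A_n + (B_n - A_n)/q_n].  As [A_n, B_n >= 0] by convexity and
    [1/q_max <= 1/q_n <= 1/q_min], each node contributes at most
    [(1 - 1/q_max) A_n/q_n + B_n/(q_n q_min)], and [sum_n B_n/q_n] is the
    Bregman divergence of [f] between [x^t] and [x*]. *)

Definition ord_rot {m : nat} (k : nat) (i : 'I_m) : 'I_m :=
  Ordinal (ltn_pmod (i + k) (leq_ltn_trans (leq0n i) (ltn_ord i))).

Lemma ord_rot_inj m k : injective (@ord_rot m k).
Proof.
move=> i j /(congr1 val) /= /eqP; rewrite eqn_modDr !modn_small //.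
by move=> /eqP /val_inj.
Qed.

Lemma ord_rot_injl m (i : 'I_m) : injective (fun k : 'I_m => ord_rot k i).
Proof.
move=> k l /(congr1 val) /= /eqP; rewrite eqn_modDl !modn_small //.
by move=> /eqP /val_inj.
Qed.

Section UniformSelection.
Variables (N : nat) (q : 'I_N -> nat).

Definition sel_rot (n0 : 'I_N) (k : nat) (s : sel q) : sel q :=
  [ffun n => if n == n0 then ord_rot k (s n) else s n].

Lemma sel_rot_inj n0 k : injective (sel_rot n0 k).
Proof.
move=> s s' /ffunP E; apply/ffunP => n; have := E n.
by rewrite !ffunE; case: eqP => _ //; apply: ord_rot_inj.
Qed.

Lemma card_sel : #|{: sel q}| = (\prod_(n < N) q n)%N.
Proof.
rewrite card_dep_ffun foldrE big_map big_enum /=.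
by apply: eq_bigr => n _; rewrite card_ord.
Qed.

(* Rotating the [n0]-th coordinate permutes [sel q], so the sum on the left
   does not depend on the rotation; summing over all [q n0] rotations makes
   [h (s n0)] run over all of ['I_(q n0)] for each [s]. *)
Lemma sum_sel_coord (V : nmodType) (n0 : 'I_N) (h : 'I_(q n0) -> V) :
  (\sum_(s : sel q) h (s n0)) *+ q n0 = (\sum_j h j) *+ #|{: sel q}|.
Proof.
have rot_inv k : \sum_(s : sel q) h (s n0) = \sum_(s : sel q) h (ord_rot k (s n0)).
  rewrite (reindex_inj (@sel_rot_inj n0 k)); apply: eq_bigr => s _.
  by rewrite ffunE eqxx.
transitivity (\sum_(k < q n0) \sum_(s : sel q) h (ord_rot k (s n0))).
  by rewrite -[in LHS](card_ord (q n0)) -sumr_const; apply: eq_bigr => k _; apply: rot_inv.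
rewrite exchange_big /= -sumr_const; apply: eq_bigr => s _.
by rewrite [RHS](reindex_inj (@ord_rot_injl _ (s n0))).
Qed.

Variable R : numFieldType.
Hypothesis q_gt0 : forall n, (0 < q n)%N.

Local Notation weight := (\prod_(n < N) ((q n)%:R : R)^-1).

Lemma prod_q_neq0 : \prod_(n < N) ((q n)%:R : R) != 0.
Proof. by apply/prodf_neq0 => n _; rewrite pnatr_eq0 -lt0n q_gt0. Qed.

Lemma avg_sel_const (a : R) : weight * \sum_(s : sel q) a = a.
Proof.
rewrite sumr_const card_sel -mulr_natr natr_prod prodfV.
by rewrite mulrCA mulVf ?mulr1 // prod_q_neq0.
Qed.

Lemma avg_sel_coord (n0 : 'I_N) (h : 'I_(q n0) -> R) :
  weight * \sum_(s : sel q) h (s n0) = (q n0)%:R^-1 * \sum_j h j.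
Proof.
have qn0 : ((q n0)%:R : R) != 0 by rewrite pnatr_eq0 -lt0n q_gt0.
have E : (\sum_(s : sel q) h (s n0)) * (q n0)%:R
    = \prod_(n < N) ((q n)%:R : R) * \sum_j h j.
  by rewrite mulr_natr sum_sel_coord -mulr_natr card_sel natr_prod mulrC.
rewrite prodfV -(mulfK qn0 (\sum_(s : sel q) h (s n0))) E -mulrA mulKf.
  by rewrite mulrC.
exact: prod_q_neq0.
Qed.

End UniformSelection.

Section DsaState.
Variables (R : realType) (p N : nat) (q : 'I_N -> nat)
  (g : forall n : 'I_N, 'I_(q n) -> 'rV[R]_p -> 'rV[R]_p)
  (W Wt : 'M[R]_N) (alpha : R) (x0 : 'I_N -> 'rV[R]_p).

Local Notation state := (dsa_state g W Wt alpha x0).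

Lemma dsa_state_past (om1 om2 : nat -> sel q) t :
  (forall k, (k <= t)%N -> om1 k = om2 k) -> state om1 t = state om2 t.
Proof.
elim: t => [|t IH] E /=; first by rewrite E.
by rewrite IH => [|k le_kt]; [rewrite E | apply: E; apply: leqW].
Qed.

Lemma dsa_y_om_set (om : nat -> sel q) t s :
  dsa_y g W Wt alpha x0 (om_set om t.+1 s) t.+2 =
  yupd (dsa_y g W Wt alpha x0 om t.+1) (dsa_x g W Wt alpha x0 om t.+1) s.
Proof.
have past : state (om_set om t.+1 s) t = state om t.
  apply: dsa_state_past => k le_kt; rewrite /om_set.
  by rewrite (negbTE (_ : k != t.+1)) // neq_ltn ltnS le_kt.
rewrite /dsa_y /dsa_x /= past /om_set eqxx.
by case: (state om t) => [[[xa xb] yb] ga].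
Qed.

End DsaState.

Section SelectionBounds.
Variables (N : nat) (q : 'I_N -> nat).

Lemma leq_qmax n : (q n <= qmax q)%N.
Proof. exact: leq_bigmax. Qed.

Lemma geq_qmin n : (qmin q <= q n)%N.
Proof. by rewrite /qmin -minEnat -leEnat bigmin_le. Qed.

Lemma qmin_gt0 : (0 < N)%N -> (forall n, (0 < q n)%N) -> (0 < qmin q)%N.
Proof.
move=> N_gt0 q_gt0; rewrite /qmin -minEnat -leEnat.
apply: le_bigmin => [|n _]; rewrite leEnat; last exact: q_gt0.
exact: leq_trans (q_gt0 (Ordinal N_gt0)) (leq_qmax _).
Qed.

Variable R : numFieldType.

Lemma inv_qmax_le n : (0 < q n)%N -> ((qmax q)%:R^-1 : R) <= (q n)%:R^-1.
Proof.
move=> qn_gt0; have qmax_gt0 := leq_trans qn_gt0 (leq_qmax n).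
by rewrite lef_pV2 ?posrE ?ltr0n // ler_nat leq_qmax.
Qed.

Lemma le_inv_qmin n : (0 < qmin q)%N -> ((q n)%:R^-1 : R) <= (qmin q)%:R^-1.
Proof.
move=> qmin_gt0; have qn_gt0 := leq_trans qmin_gt0 (geq_qmin n).
by rewrite lef_pV2 ?posrE ?ltr0n // ler_nat geq_qmin.
Qed.

End SelectionBounds.

Section Dotp.
Variables (R : realType) (p : nat).

Lemma dotpDl (u v w : 'rV[R]_p) : dotp (u + v) w = dotp u w + dotp v w.
Proof. by rewrite /dotp -big_split; apply: eq_bigr => j _; rewrite mxE mulrDl. Qed.

Lemma dotp0l (w : 'rV[R]_p) : dotp 0 w = 0.
Proof. by rewrite /dotp big1 // => j _; rewrite mxE mul0r. Qed.

Lemma dotpZl a (u w : 'rV[R]_p) : dotp (a *: u) w = a * dotp u w.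
Proof. by rewrite /dotp mulr_sumr; apply: eq_bigr => j _; rewrite mxE mulrA. Qed.

Lemma dotp_suml (I : Type) (r : seq I) (P : pred I) (v : I -> 'rV[R]_p) w :
  dotp (\sum_(i <- r | P i) v i) w = \sum_(i <- r | P i) dotp (v i) w.
Proof. by elim/big_rec2: _ => [|i y1 y2 _ <-]; rewrite ?dotp0l ?dotpDl. Qed.

Definition breg (h : 'rV[R]_p -> R) (dh : 'rV[R]_p -> 'rV[R]_p) (xs z : 'rV[R]_p) : R :=
  h z - h xs - dotp (dh xs) (z - xs).

Lemma breg_ge0 (h : 'rV[R]_p -> R) (dh : 'rV[R]_p -> 'rV[R]_p) mu xs z :
  0 <= mu ->
  (forall y, h xs + dotp (dh xs) (y - xs) + mu / 2 * norm2 (y - xs) ^+ 2 <= h y) ->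
  0 <= breg h dh xs z.
Proof.
move=> mu_ge0 /(_ z); rewrite /breg.
have : 0 <= mu / 2 * norm2 (z - xs) ^+ 2 by rewrite mulr_ge0 ?divr_ge0 ?sqr_ge0.
lra.
Qed.

End Dotp.

Arguments breg {R p}.

Lemma ler_refresh (R : realFieldType) (lo a hi A B : R) :
  0 <= lo -> lo <= a -> a <= hi -> 0 <= A -> 0 <= B ->
  a * (A + a * (B - A)) <= (1 - lo) * (a * A) + hi * (a * B).
Proof.
move=> lo_ge0 lo_a a_hi A_ge0 B_ge0; have a_ge0 := le_trans lo_ge0 lo_a.
have : 0 <= a * A * (a - lo) by rewrite !mulr_ge0 // subr_ge0.
have : 0 <= a * B * (hi - a) by rewrite !mulr_ge0 // subr_ge0.
nra.
Qed.

Section Lyapunov.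
Variables (R : realType) (p N : nat) (q : 'I_N -> nat)
  (f : forall n : 'I_N, 'I_(q n) -> 'rV[R]_p -> R)
  (g : forall n : 'I_N, 'I_(q n) -> 'rV[R]_p -> 'rV[R]_p) (xs : 'rV[R]_p).

Let phi n (i : 'I_(q n)) := breg (f n i) (g n i) xs.

Lemma bregF_breg (x : 'I_N -> 'rV[R]_p) :
  bregF f g xs x = \sum_(n < N) (q n)%:R^-1 * \sum_(i < q n) phi n i (x n).
Proof.
apply: eq_bigr => n _.
by rewrite /fbar /gbar dotpZl dotp_suml /breg !sumrB !mulrBr.
Qed.

Lemma plyap_yupd (Y : tableV R p q) (X : stackV R p N) (s : sel q) :
  plyap f g xs (yupd Y X s) = \sum_(n < N) (q n)%:R^-1 *
    (\sum_(i < q n) phi n i (Y n i) + (phi n (s n) (X n) - phi n (s n) (Y n (s n)))).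
Proof.
apply: eq_bigr => n _; congr (_ * _).
rewrite (bigD1 (s n)) //= [in RHS](bigD1 (s n)) //= /yupd eqxx.
rewrite (eq_bigr (fun i => phi n i (Y n i))) => [|i /negbTE -> //].
by rewrite [RHS]addrAC subrKC.
Qed.

Lemma avg_plyap_yupd : (forall n, (0 < q n)%N) ->
  forall (Y : tableV R p q) (X : stackV R p N),
  \prod_(n < N) ((q n)%:R : R)^-1 * \sum_(s : sel q) plyap f g xs (yupd Y X s)
  = \sum_(n < N) (q n)%:R^-1 * (\sum_(i < q n) phi n i (Y n i)
      + (q n)%:R^-1 * (\sum_(i < q n) phi n i (X n) - \sum_(i < q n) phi n i (Y n i))).
Proof.
move=> q_gt0 Y X; rewrite (eq_bigr _ (fun s _ => plyap_yupd Y X s)).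
rewrite exchange_big mulr_sumr; apply: eq_bigr => n _ /=.
rewrite -mulr_sumr mulrCA big_split /= mulrDr avg_sel_const //.
rewrite (avg_sel_coord _ _ _ q_gt0 _ (fun j => phi n j (X n) - phi n j (Y n j))).
by congr (_ * (_ + _ * _)); rewrite sumrB.
Qed.

Lemma avg_plyap_yupd_le : (0 < N)%N -> (forall n, (0 < q n)%N) ->
  (forall n i z, 0 <= phi n i z) ->
  forall (Y : tableV R p q) (X : stackV R p N),
  \prod_(n < N) ((q n)%:R : R)^-1 * \sum_(s : sel q) plyap f g xs (yupd Y X s)
  <= (1 - ((qmax q)%:R : R)^-1) * plyap f g xs Y + ((qmin q)%:R : R)^-1 * bregF f g xs X.
Proof.
move=> N_gt0 q_gt0 phi_ge0 Y X.
have plyapE : plyap f g xs Y = \sum_(n < N) (q n)%:R^-1 * \sum_(i < q n) phi n i (Y n i)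
  by [].
rewrite avg_plyap_yupd // bregF_breg plyapE !mulr_sumr -big_split /=.
apply: ler_sum => n _; apply: ler_refresh.
- by rewrite invr_ge0 ler0n.
- exact: inv_qmax_le.
- exact/le_inv_qmin/qmin_gt0.
- by apply: sumr_ge0 => i _.
- by apply: sumr_ge0 => i _.
Qed.

End Lyapunov.

Theorem lemma5 (R : realType) (p N : nat) (q : 'I_N -> nat)
  (adj : rel 'I_N)
  (f : forall n : 'I_N, 'I_(q n) -> 'rV[R]_p -> R)
  (g : forall n : 'I_N, 'I_(q n) -> 'rV[R]_p -> 'rV[R]_p)
  (mu L : R) (W Wt : 'M[R]_N) (alpha : R) (x0 : 'I_N -> 'rV[R]_p)
  (xs : 'rV[R]_p) :
  (0 < N)%N ->
  (forall n, (0 < q n)%N) ->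
  (* connected network: symmetric, irreflexive, connected adjacency *)
  (forall n m, adj n m = adj m n) -> (forall n, ~~ adj n n) ->
  (forall n m, fingraph.connect adj n m) ->
  weights_ok adj W Wt ->
  0 < mu -> 0 < L -> 0 < alpha ->
  (* each f_{n,i} differentiable with gradient g n i *)
  (forall n i x, differentiable (f n i) x) ->
  (forall n i x v, 'd (f n i) x v = dotp (g n i x) v) ->
  (* mu-strong convexity *)
  (forall n i x y, f n i x + dotp (g n i x) (y - x) + mu / 2 * (norm2 (y - x)) ^+ 2
                   <= f n i y) ->
  (* L-Lipschitz gradient *)
  (forall n i x y, norm2 (g n i x - g n i y) <= L * norm2 (x - y)) ->
  (* xs is the minimizer of sum_n f_n *)
  (forall z, \sum_(n < N) fbar f n xs <= \sum_(n < N) fbar f n z) ->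
  forall (om : nat -> sel q) (t : nat), (0 < t)%N ->
    condE_t (fun om' => plyap f g xs (dsa_y g W Wt alpha x0 om' t.+1)) t om
    <= (1 - ((qmax q)%:R : R)^-1) * plyap f g xs (dsa_y g W Wt alpha x0 om t)
       + ((qmin q)%:R : R)^-1 * bregF f g xs (dsa_x g W Wt alpha x0 om t).
Proof.
move=> N_gt0 q_gt0 _ _ _ _ mu_gt0 _ _ _ _ strong_cvx _ _ om [//|t] _.
rewrite /condE_t; under eq_bigr => s _ do rewrite dsa_y_om_set.
rewrite -mulr_sumr; apply: avg_plyap_yupd_le => // n i z.
by apply: (@breg_ge0 _ _ _ _ mu) => [|y]; [exact: ltW | exact: strong_cvx].
Qed.
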